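(* Let $(A,\circ_A,[\cdot,\cdot]_A)$ and $(B,\circ_B,[\cdot,\cdot]_B)$ be dual pre-Poisson algebras. Define bilinear operations on $A\otimes B$ by $$(x\otimes a)\circ_{A\otimes B}(y\otimes b)=(x\circ_A y)\otimes(a\circ_B b),$$ $$[x\otimes a,y\otimes b]_{A\otimes B}=[x,y]_A\otimes(a\circ_B b)+(x\circ_A y)\otimes[a,b]_B,$$ for $x,y\in A$, $a,b\in B$. Then $(A\otimes B,\circ_{A\otimes B},[\cdot,\cdot]_{A\otimes B})$ is a dual pre-Poisson algebra.
   Context: Field $\mathbb{F}$ of characteristic $0$. A dual pre-Poisson algebra is a vector space with bilinear operations $\circ,[\cdot,\cdot]$ satisfying, for all $x,y,z$: $x\circ(y\circ z)=(x\circ y)\circ z=(y\circ x)\circ z$; $[x,[y,z]]=[[x,y],z]+[y,[x,z]]$; $[x,y\circ z]=[x,y]\circ z+y\circ[x,z]$; $[x\circ y,z]=x\circ[y,z]+y\circ[x,z]$; $[x,y]\circ z=-[y,x]\circ z$. *)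

From HB Require Import structures.
From mathcomp Require Import all_boot all_order all_algebra.
Set Implicit Arguments. Unset Strict Implicit. Unset Printing Implicit Defensive.
Import GRing.Theory.
Local Open Scope ring_scope.

Definition lin_map (F : fieldType) (U W : lmodType F) (g : U -> W) : Prop :=
  forall (c : F) (u v : U), g (c *: u + v) = c *: g u + g v.

Definition bilin (F : fieldType) (U V W : lmodType F) (f : U -> V -> W) : Prop :=
  (forall (c : F) (u1 u2 : U) (v : V), f (c *: u1 + u2) v = c *: f u1 v + f u2 v) /\
  (forall (c : F) (u : U) (v1 v2 : V), f u (c *: v1 + v2) = c *: f u v1 + f u v2).

Definition is_dual_prepoisson (F : fieldType) (A : lmodType F)
    (circ br : A -> A -> A) : Prop :=
  bilin circ /\ bilin br /\
  (forall x y z, circ x (circ y z) = circ (circ x y) z) /\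
  (forall x y z, circ (circ x y) z = circ (circ y x) z) /\
  (forall x y z, br x (br y z) = br (br x y) z + br y (br x z)) /\
  (forall x y z, br x (circ y z) = circ (br x y) z + circ y (br x z)) /\
  (forall x y z, br (circ x y) z = circ x (br y z) + circ y (br x z)) /\
  (forall x y z, circ (br x y) z = - circ (br y x) z).

Definition is_tensor_product (F : fieldType) (A B T : lmodType F)
    (tens : A -> B -> T) : Prop :=
  bilin tens /\
  forall (W : lmodType F) (f : A -> B -> W), bilin f ->
    exists! g : T -> W, lin_map g /\ forall x a, g (tens x a) = f x a.

From HB Require Import structures.
From mathcomp Require Import all_boot all_order all_algebra.
From Stdlib Require Import IndefiniteDescription.
Set Implicit Arguments. Unset Strict Implicit. Unset Printing Implicit Defensive.
Import GRing.Theory.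
Local Open Scope ring_scope.

(* Both operations on A (x) B are obtained by lifting a map that is bilinear in
   (x, a) and in (y, b) through the universal property twice.  Every axiom is an
   equation between two trilinear maps T^3 -> T, so by the universal property it
   suffices to check it on pure tensors, where it follows from the axioms of A
   and B. *)

Section LinearMaps.
Variables (F : fieldType) (U V W : lmodType F).

Lemma lin_map0 (g : U -> W) : lin_map g -> g 0 = 0.
Proof.
move=> hg; apply: (@addrI _ (g 0)).
by rewrite addr0 -{1}(scale1r (g 0)) -hg scale1r addr0.
Qed.

Lemma lin_mapD (g : U -> W) : lin_map g -> forall u v, g (u + v) = g u + g v.
Proof. by move=> hg u v; have := hg 1 u v; rewrite !scale1r. Qed.

Lemma lin_mapZ (g : U -> W) : lin_map g -> forall c u, g (c *: u) = c *: g u.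
Proof. by move=> hg c u; rewrite -[c *: u]addr0 hg (lin_map0 hg) addr0. Qed.

Lemma lin_mapN (g : U -> W) : lin_map g -> forall u, g (- u) = - g u.
Proof. by move=> hg u; rewrite -scaleN1r (lin_mapZ hg) scaleN1r. Qed.

Lemma lin_map_add (g h : U -> W) :
  lin_map g -> lin_map h -> lin_map (fun u => g u + h u).
Proof. by move=> hg hh c u v; rewrite hg hh scalerDr addrACA. Qed.

Lemma lin_map_opp (g : U -> W) : lin_map g -> lin_map (fun u => - g u).
Proof. by move=> hg c u v; rewrite hg opprD scalerN. Qed.

Lemma lin_map_comb (g h : U -> W) (d : F) :
  lin_map g -> lin_map h -> lin_map (fun u => d *: g u + h u).
Proof.
by move=> hg hh c u v; rewrite hg hh !scalerDr !scalerA mulrC addrACA.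
Qed.

Lemma lin_map_comp (g : V -> W) (h : U -> V) :
  lin_map g -> lin_map h -> lin_map (fun u => g (h u)).
Proof. by move=> hg hh c u v; rewrite hh hg. Qed.

End LinearMaps.

Section BilinearMaps.
Variables (F : fieldType) (U V W : lmodType F) (f : U -> V -> W).
Hypothesis hf : bilin f.

Lemma bilin_linl v : lin_map (f^~ v).
Proof. by move=> c u1 u2; apply: hf.1. Qed.

Lemma bilin_linr u : lin_map (f u).
Proof. by move=> c v1 v2; apply: hf.2. Qed.

Lemma bilinDl u1 u2 v : f (u1 + u2) v = f u1 v + f u2 v.
Proof. exact: (lin_mapD (bilin_linl v)). Qed.

Lemma bilinDr u v1 v2 : f u (v1 + v2) = f u v1 + f u v2.
Proof. exact: (lin_mapD (bilin_linr u)). Qed.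

Lemma bilinNl u v : f (- u) v = - f u v.
Proof. exact: (lin_mapN (bilin_linl v)). Qed.

Lemma bilinNr u v : f u (- v) = - f u v.
Proof. exact: (lin_mapN (bilin_linr u)). Qed.

End BilinearMaps.

Section BilinearConstructions.
Variables (F : fieldType) (U V W X Y : lmodType F).

Lemma bilin_add (f g : U -> V -> W) :
  bilin f -> bilin g -> bilin (fun u v => f u v + g u v).
Proof.
move=> hf hg; split=> [c u1 u2 v | c u v1 v2].
  exact: (lin_map_add (bilin_linl hf v) (bilin_linl hg v)).
exact: (lin_map_add (bilin_linr hf u) (bilin_linr hg u)).
Qed.

Lemma bilin_comp (f : U -> V -> W) (p : X -> U) (q : Y -> V) :
  bilin f -> lin_map p -> lin_map q -> bilin (fun x y => f (p x) (q y)).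
Proof.
move=> hf hp hq; split=> [c x1 x2 y | c x y1 y2].
  exact: (lin_map_comp (bilin_linl hf (q y)) hp).
exact: (lin_map_comp (bilin_linr hf (p x)) hq).
Qed.

Lemma bilin_postcomp (g : W -> X) (f : U -> V -> W) :
  lin_map g -> bilin f -> bilin (fun u v => g (f u v)).
Proof.
move=> hg hf; split=> [c u1 u2 v | c u v1 v2].
  exact: (lin_map_comp hg (bilin_linl hf v)).
exact: (lin_map_comp hg (bilin_linr hf u)).
Qed.

End BilinearConstructions.

Definition trilin (F : fieldType) (U V X W : lmodType F) (P : U -> V -> X -> W) :=
  [/\ forall v w, lin_map (fun u => P u v w),
      forall u w, lin_map (fun v => P u v w) &
      forall u v, lin_map (P u v)].

Section TrilinearMaps.
Variables (F : fieldType) (U V X Y W : lmodType F).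

Lemma trilin_add (P Q : U -> V -> X -> W) :
  trilin P -> trilin Q -> trilin (fun u v w => P u v w + Q u v w).
Proof.
by case=> P1 P2 P3 [Q1 Q2 Q3]; split=> *; apply: lin_map_add.
Qed.

Lemma trilin_opp (P : U -> V -> X -> W) :
  trilin P -> trilin (fun u v w => - P u v w).
Proof. by case=> P1 P2 P3; split=> *; apply: lin_map_opp. Qed.

Lemma trilin_swap (P : V -> U -> X -> W) :
  trilin P -> trilin (fun u v w => P v u w).
Proof. by case=> P1 P2 P3; split. Qed.

Lemma trilin_compl (f : Y -> X -> W) (g : U -> V -> Y) :
  bilin f -> bilin g -> trilin (fun u v w => f (g u v) w).
Proof.
move=> hf hg; split=> [v w | u w | u v].
- exact: (lin_map_comp (bilin_linl hf w) (bilin_linl hg v)).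
- exact: (lin_map_comp (bilin_linl hf w) (bilin_linr hg u)).
- exact: bilin_linr.
Qed.

Lemma trilin_compr (f : U -> Y -> W) (g : V -> X -> Y) :
  bilin f -> bilin g -> trilin (fun u v w => f u (g v w)).
Proof.
move=> hf hg; split=> [v w | u w | u v].
- exact: bilin_linl.
- exact: (lin_map_comp (bilin_linr hf u) (bilin_linl hg w)).
- exact: (lin_map_comp (bilin_linr hf u) (bilin_linr hg v)).
Qed.

End TrilinearMaps.

Section TensorProduct.
Variables (F : fieldType) (A B T : lmodType F) (tens : A -> B -> T).
Hypothesis hT : is_tensor_product tens.

Lemma tensor_bilin : bilin tens.
Proof. exact: hT.1. Qed.

Lemma tensor_lin_ext (W : lmodType F) (g1 g2 : T -> W) :
  lin_map g1 -> lin_map g2 ->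
  (forall x a, g1 (tens x a) = g2 (tens x a)) -> g1 = g2.
Proof.
move=> hg1 hg2 e12; have [_ tens_univ] := hT.
have [g [_ g_uniq]] := tens_univ W _ (bilin_postcomp hg1 tensor_bilin).
by rewrite -(g_uniq g1) // (g_uniq g2) //; split=> // x a; rewrite e12.
Qed.

Lemma tensor_lin_ext_comb (W : lmodType F) (g g1 g2 : T -> W) (c : F) :
  lin_map g -> lin_map g1 -> lin_map g2 ->
  (forall x a, g (tens x a) = c *: g1 (tens x a) + g2 (tens x a)) ->
  forall t, g t = c *: g1 t + g2 t.
Proof.
move=> hg hg1 hg2 e t.
by rewrite (tensor_lin_ext hg (lin_map_comb c hg1 hg2) e).
Qed.

Lemma tensor_lift_family (I : Type) (W : lmodType F) (f : I -> A -> B -> W) :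
  (forall i, bilin (f i)) ->
  exists g : I -> T -> W,
    forall i, lin_map (g i) /\ forall x a, g i (tens x a) = f i x a.
Proof.
move=> hf; apply: (functional_choice (fun i (g : T -> W) =>
  lin_map g /\ forall x a, g (tens x a) = f i x a)) => i.
by have [g [hg _]] := hT.2 W _ (hf i); exists g.
Qed.

Lemma tensor_bilin_lift (W : lmodType F) (h : A -> B -> A -> B -> W) :
  (forall y b, bilin (fun x a => h x a y b)) -> (forall x a, bilin (h x a)) ->
  exists2 op : T -> T -> W, bilin op &
    forall x a y b, op (tens x a) (tens y b) = h x a y b.
Proof.
move=> hl hr.
have [L hL] := tensor_lift_family (fun yb : A * B => hl yb.1 yb.2).
have L_lin yb := (hL yb).1; have L_tens yb := (hL yb).2.
have L_bilin u : bilin (fun y b => L (y, b) u).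
  split=> [c y1 y2 b | c y b1 b2]; apply: tensor_lin_ext_comb => // x a;
    rewrite !L_tens; [exact: (hr x a).1 | exact: (hr x a).2].
have [M hM] := tensor_lift_family L_bilin.
have M_lin u := (hM u).1; have M_tens u := (hM u).2.
exists M => [|x a y b]; last by rewrite M_tens L_tens.
split=> [c u1 u2 v | c u v1 v2]; last exact: M_lin.
by apply: tensor_lin_ext_comb => // y b; rewrite !M_tens L_lin.
Qed.

Lemma tensor_trilin_ext (W : lmodType F) (P Q : T -> T -> T -> W) :
  trilin P -> trilin Q ->
  (forall x a y b z c,
     P (tens x a) (tens y b) (tens z c) = Q (tens x a) (tens y b) (tens z c)) ->
  forall u v w, P u v w = Q u v w.
Proof.
case=> P1 P2 P3 [Q1 Q2 Q3] e3.
have e2 x a y b : P (tens x a) (tens y b) = Q (tens x a) (tens y b).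
  exact: tensor_lin_ext (e3 x a y b).
have e1 x a w : (fun v => P (tens x a) v w) = (fun v => Q (tens x a) v w).
  by apply: tensor_lin_ext => // y b; rewrite e2.
move=> u v w.
have e0 : (fun u => P u v w) = (fun u => Q u v w).
  by apply: tensor_lin_ext => // x a; apply: (congr1 (fun g => g v) (e1 x a w)).
exact: (congr1 (fun g => g u) e0).
Qed.

End TensorProduct.

Section DualPrePoissonAxioms.
Variables (F : fieldType) (A : lmodType F) (circ br : A -> A -> A).
Hypothesis hA : is_dual_prepoisson circ br.

Lemma dpp_circ_bilin : bilin circ.
Proof. by case: hA. Qed.

Lemma dpp_br_bilin : bilin br.
Proof. by case: hA => _ []. Qed.

Lemma dpp_circA x y z : circ x (circ y z) = circ (circ x y) z.
Proof. by case: hA => _ [_ []]. Qed.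

Lemma dpp_circCl x y z : circ (circ x y) z = circ (circ y x) z.
Proof. by case: hA => _ [_ [_ []]]. Qed.

Lemma dpp_br_brr x y z : br x (br y z) = br (br x y) z + br y (br x z).
Proof. by case: hA => _ [_ [_ [_ []]]]. Qed.

Lemma dpp_br_circr x y z : br x (circ y z) = circ (br x y) z + circ y (br x z).
Proof. by case: hA => _ [_ [_ [_ [_ []]]]]. Qed.

Lemma dpp_br_circl x y z : br (circ x y) z = circ x (br y z) + circ y (br x z).
Proof. by case: hA => _ [_ [_ [_ [_ [_ []]]]]]. Qed.

Lemma dpp_circ_brN x y z : circ (br x y) z = - circ (br y x) z.
Proof. by case: hA => _ [_ [_ [_ [_ [_ []]]]]]. Qed.

End DualPrePoissonAxioms.

Section AddPermutation.
Variable V : nmodType.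

Lemma addr_pull (x l r r' : V) : r = x + r' -> l = r' -> x + l = r.
Proof. by move=> -> ->. Qed.

Lemma addr_pull_next (x y l l' : V) : l = x + l' -> y + l = x + (y + l').
Proof. by move=> ->; rewrite addrCA. Qed.

End AddPermutation.

(* [sum_perm] closes [s = s'] when the sums [s] and [s'] have the same summands
   up to order. *)
Ltac find_summand :=
  first [ exact: erefl | exact: addrC | apply: addr_pull_next; find_summand ].
Ltac pull_summands :=
  first [ exact: erefl | apply: addr_pull; [find_summand | pull_summands] ].
Ltac sum_perm := rewrite -?addrA; pull_summands.

Section TensorDualPrePoisson.
Variables (F : fieldType) (A B T : lmodType F).
Variables (circA brA : A -> A -> A) (circB brB : B -> B -> B).
Hypotheses (hA : is_dual_prepoisson circA brA) (hB : is_dual_prepoisson circB brB).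
Variable tens : A -> B -> T.
Hypothesis hT : is_tensor_product tens.

Lemma tensor_ops_exist :
  exists circT brT : T -> T -> T,
    bilin circT /\ bilin brT /\
    (forall x y a b, circT (tens x a) (tens y b) = tens (circA x y) (circB a b)) /\
    (forall x y a b, brT (tens x a) (tens y b) =
                     tens (brA x y) (circB a b) + tens (circA x y) (brB a b)).
Proof.
have ht := tensor_bilin hT.
have cA := dpp_circ_bilin hA; have bA := dpp_br_bilin hA.
have cB := dpp_circ_bilin hB; have bB := dpp_br_bilin hB.
have [circT hc circT_tens] := tensor_bilin_lift hT
  (fun y b => bilin_comp ht (bilin_linl cA y) (bilin_linl cB b))
  (fun x a => bilin_comp ht (bilin_linr cA x) (bilin_linr cB a)).
have [brT hb brT_tens] := tensor_bilin_lift hT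
  (fun y b => bilin_add (bilin_comp ht (bilin_linl bA y) (bilin_linl cB b))
                        (bilin_comp ht (bilin_linl cA y) (bilin_linl bB b)))
  (fun x a => bilin_add (bilin_comp ht (bilin_linr bA x) (bilin_linr cB a))
                        (bilin_comp ht (bilin_linr cA x) (bilin_linr bB a))).
by exists circT, brT.
Qed.

Variables circT brT : T -> T -> T.
Hypotheses (hc : bilin circT) (hb : bilin brT).
Hypothesis circT_tens : forall x y a b,
  circT (tens x a) (tens y b) = tens (circA x y) (circB a b).
Hypothesis brT_tens : forall x y a b,
  brT (tens x a) (tens y b) = tens (brA x y) (circB a b) + tens (circA x y) (brB a b).

Let opsE := (circT_tens, brT_tens, bilinDl hc, bilinDr hc, bilinDl hb, bilinDr hb).
Let tensE := (bilinDl (tensor_bilin hT), bilinDr (tensor_bilin hT),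
              bilinNl (tensor_bilin hT), bilinNr (tensor_bilin hT)).

Lemma circT_assoc u v w : circT u (circT v w) = circT (circT u v) w.
Proof.
apply: (tensor_trilin_ext hT (trilin_compr hc hc) (trilin_compl hc hc)) => x a y b z c.
by rewrite !circT_tens (dpp_circA hA) (dpp_circA hB).
Qed.

Lemma circT_circCl u v w : circT (circT u v) w = circT (circT v u) w.
Proof.
apply: (tensor_trilin_ext hT (trilin_compl hc hc)
  (trilin_swap (trilin_compl hc hc))) => x a y b z c.
by rewrite !circT_tens (dpp_circCl hA x) (dpp_circCl hB a).
Qed.

Lemma brT_brTr u v w : brT u (brT v w) = brT (brT u v) w + brT v (brT u w).
Proof.
apply: (tensor_trilin_ext hT (trilin_compr hb hb)
  (trilin_add (trilin_compl hb hb) (trilin_swap (trilin_compr hb hb)))) => x a y b z c.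
rewrite !opsE (dpp_br_brr hA x) (dpp_br_brr hB a).
rewrite !(dpp_br_circr hA, dpp_br_circr hB, dpp_br_circl hA, dpp_br_circl hB).
rewrite !(dpp_circA hA, dpp_circA hB) (dpp_circCl hA y x) (dpp_circCl hB b a).
rewrite (dpp_circ_brN hA y x) (dpp_circ_brN hB b a) !tensE.
(* The right side has two extra pairs of opposite terms, [t1, - t1] and
   [t2, - t2], coming from the antisymmetry of A and of B. *)
set t1 := tens (circA (brA x y) z) (circB b (brB a c)).
set t2 := tens (circA y (brA x z)) (circB (brB a b) c).
rewrite -[LHS]addr0 -(subrr t1) -[LHS]addr0 -(subrr t2).
sum_perm.
Qed.

Lemma brT_circTr u v w : brT u (circT v w) = circT (brT u v) w + circT v (brT u w).
Proof.
apply: (tensor_trilin_ext hT (trilin_compr hb hc)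
  (trilin_add (trilin_compl hc hb) (trilin_swap (trilin_compr hc hb)))) => x a y b z c.
rewrite !opsE (dpp_br_circr hA) (dpp_br_circr hB) !tensE.
rewrite !(dpp_circA hA, dpp_circA hB) (dpp_circCl hA y x) (dpp_circCl hB b a).
sum_perm.
Qed.

Lemma brT_circTl u v w : brT (circT u v) w = circT u (brT v w) + circT v (brT u w).
Proof.
apply: (tensor_trilin_ext hT (trilin_compl hb hc)
  (trilin_add (trilin_compr hc hb) (trilin_swap (trilin_compr hc hb)))) => x a y b z c.
rewrite !opsE (dpp_br_circl hA) (dpp_br_circl hB) !tensE.
rewrite !(dpp_circA hA, dpp_circA hB) (dpp_circCl hA y x) (dpp_circCl hB b a).
sum_perm.
Qed.

Lemma circT_brTN u v w : circT (brT u v) w = - circT (brT v u) w.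
Proof.
apply: (tensor_trilin_ext hT (trilin_compl hc hb)
  (trilin_opp (trilin_swap (trilin_compl hc hb)))) => x a y b z c.
rewrite !opsE (dpp_circ_brN hA y) (dpp_circ_brN hB b) !tensE.
by rewrite (dpp_circCl hA y x) (dpp_circCl hB b a) opprD !opprK.
Qed.

Lemma tensor_dual_prepoisson : is_dual_prepoisson circT brT.
Proof.
exact: (conj hc (conj hb (conj circT_assoc (conj circT_circCl
  (conj brT_brTr (conj brT_circTr (conj brT_circTl circT_brTN))))))).
Qed.

End TensorDualPrePoisson.

Theorem proposition2p5 (F : fieldType) (char0 : [pchar F] =i pred0)
    (A B : lmodType F)
    (circA brA : A -> A -> A) (circB brB : B -> B -> B)
    (hA : is_dual_prepoisson circA brA) (hB : is_dual_prepoisson circB brB)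
    (T : lmodType F) (tens : A -> B -> T) (hT : is_tensor_product tens) :
  (exists (circT brT : T -> T -> T),
     bilin circT /\ bilin brT /\
     (forall x y a b, circT (tens x a) (tens y b) = tens (circA x y) (circB a b)) /\
     (forall x y a b, brT (tens x a) (tens y b) =
                      tens (brA x y) (circB a b) + tens (circA x y) (brB a b))) /\
  (forall circT brT : T -> T -> T,
     bilin circT -> bilin brT ->
     (forall x y a b, circT (tens x a) (tens y b) = tens (circA x y) (circB a b)) ->
     (forall x y a b, brT (tens x a) (tens y b) =
                      tens (brA x y) (circB a b) + tens (circA x y) (brB a b)) ->
     is_dual_prepoisson circT brT).
Proof.
split; first exact (tensor_ops_exist hA hB hT).
move=> circT brT hc hb circT_tens brT_tens.
exact (tensor_dual_prepoisson hA hB hT hc hb circT_tens brT_tens).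
Qed.
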